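(* (a) If $\chi,\chi'\in M_{\mathbb{R}}$ differ by a real multiple of $\tau_d$, then $(r,p)(\chi)=(r,p)(\chi')$. (b) Let $\chi\in M$ be a weight, let $w\in\mathfrak{S}_d$, and let $\delta\in M_{\mathbb{R}}^{\mathfrak{S}_d}$ be a Weyl-invariant real weight. Then \[(r,p)(\chi+\rho+\delta)=(r,p)(w*\chi+\rho+\delta),\] where $w*\chi:=w(\chi+\rho)-\rho$.
   Context: Let $Q=(I,E)$ be a symmetric quiver (for all $i,j\in I$ the number of arrows $i\to j$ equals the number of arrows $j\to i$), with source and target maps $s,t:E\to I$. Fix $d=(d_i)_{i\in I}\in\mathbb{N}^I$. Let $R(d)=\bigoplus_{a\in E}\mathrm{Hom}(\mathbb{C}^{d_{s(a)}},\mathbb{C}^{d_{t(a)}})$ with $G(d)=\prod_{i\in I}GL(d_i)$ acting by conjugation. Standing assumption: the subquiver $Q^d$ of $Q$ with vertex set $\{i\in I: d_i\neq 0\}$ is connected and is not the quiver with one vertex and no arrows. Let $T(d)$ be the diagonal maximal torus, with weight lattice $M=\bigoplus_{i\in I,1\le j\le d_i}\mathbb{Z}\beta^i_j$ and $M_{\mathbb{R}}=M\otimes\mathbb{R}$. Let $\mathcal{W}$ be the multiset of $T(d)$-weights of $R(d)$: for each arrow $a:i\to j$ and each $1\le x\le d_i$, $1\le y\le d_j$, the weight $\beta^j_y-\beta^i_x$. Let $\tau_d:=\big(\sum_{i,j}\beta^i_j\big)/\big(\sum_i d_i\big)$. Define the region $\mathbb{W}:=\sum_{\beta\in\mathcal{W}}[0,\beta]+\mathbb{R}\tau_d\subset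 M_{\mathbb{R}}$ (Minkowski sum, one segment for each element of the multiset). For $\chi\in M_{\mathbb{R}}$, the $r$-invariant $r(\chi)$ is the smallest real $r\ge 0$ with $\chi\in r\mathbb{W}$. If $r(\chi)=r$, then $\chi=\sum_{\beta\in\mathcal{W}}c_\beta\beta+c\tau_d$ with $c\in\mathbb{R}$ and $-r\le c_\beta\le 0$ (one coefficient for each element of the multiset); the $p$-invariant $p(\chi)$ is the smallest number of coefficients $c_\beta$ equal to $-r$ among all such expressions, and $(r,p)(\chi):=(r(\chi),p(\chi))$. The Weyl group $\mathfrak{S}_d=\prod_{i\in I}\mathfrak{S}_{d_i}$ acts on $M_{\mathbb{R}}$ by $w\cdot\beta^i_j=\beta^i_{w^i(j)}$; $M_{\mathbb{R}}^{\mathfrak{S}_d}$ denotes the invariants. The positive roots of $G(d)$ are $\beta^i_a-\beta^i_b$ for $i\in I$ and $a<b$, and $\rho$ is half their sum. *)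

From HB Require Import structures.
From mathcomp Require Import all_boot all_order all_algebra all_fingroup.
From mathcomp Require Import boolp classical_sets reals.
Unset Printing Implicit Defensive.
Import Order.TTheory GRing.Theory Num.Theory.
Local Open Scope ring_scope.

(* Least natural number satisfying a (classical) predicate; 0 if none. *)
Definition nat_min (P : nat -> Prop) : nat :=
  match pselect (exists n, `[< P n >]) with
  | left ex => ex_minn ex
  | right _ => 0%N
  end.

Section QuiverWeights.
Variables (R : realType) (I E : finType) (s t : E -> I) (d : I -> nat).

Definition symmetric_quiver : Prop :=
  forall i j : I, #|[set a | (s a == i) && (t a == j)]| = #|[set a | (s a == j) && (t a == i)]|.

(* Standing assumption on Q^d: vertices {i | d i != 0}. *)
Definition Qd_adj : rel I :=
  fun i j => [&& d i != 0%N, d j != 0%N & [exists a, (s a == i) && (t a == j)]].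

Definition standing_assumption : Prop :=
  [/\ exists i, d i != 0%N,
      (forall i j, d i != 0%N -> d j != 0%N -> connect Qd_adj i j) &
      ~ (#|[set i | d i != 0%N]| = 1%N /\
         forall a, ~ (d (s a) != 0%N /\ d (t a) != 0%N))].

(* Index set of the basis beta^i_j of M, 0-indexed j < d i. *)
Definition Kidx := {i : I & 'I_(d i)}.
(* M_R = functions Kidx -> R (coordinates in the basis beta^i_j). *)
Definition MR := Kidx -> R.

Definition basis (i : I) (j : 'I_(d i)) : MR :=
  fun k => if k == Tagged (fun i => 'I_(d i)) j then 1 else 0.

(* Index set of the multiset of weights of R(d): (a, x, y). *)
Definition Widx := {a : E & ('I_(d (s a)) * 'I_(d (t a)))%type}.

Definition wt (b : Widx) : MR :=
  fun k => basis (t (tag b)) (tagged b).2 k - basis (s (tag b)) (tagged b).1 k.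

Definition tau_d : MR :=
  fun k => (\sum_(i : I) \sum_(j : 'I_(d i)) basis i j k) / (\sum_(i : I) d i)%:R.

Definition in_W (x : MR) : Prop :=
  exists (l : Widx -> R) (c : R),
    (forall b, 0 <= l b <= 1) /\
    forall k, x k = \sum_(b : Widx) l b * wt b k + c * tau_d k.

Definition r_inv (chi : MR) : R :=
  inf [set r : R | 0 <= r /\ exists w : MR, in_W w /\ forall k, chi k = r * w k].

Definition p_inv (chi : MR) : nat :=
  let r := r_inv chi in
  nat_min (fun n => exists (c : Widx -> R) (c0 : R),
    [/\ forall b, - r <= c b <= 0,
        forall k, chi k = \sum_(b : Widx) c b * wt b k + c0 * tau_d k &
        #|[set b | c b == - r]| = n]).

(* Weyl group S_d = prod_i S_{d i}; action w . beta^i_j = beta^i_{w^i j} *)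
Definition weyl_act (w : forall i : I, {perm 'I_(d i)}) (chi : MR) : MR :=
  fun k => chi (Tagged (fun i => 'I_(d i)) (((w (tag k))^-1)%g (tagged k))).

Definition weyl_invariant (delta : MR) : Prop :=
  forall w : (forall i : I, {perm 'I_(d i)}), forall k, weyl_act w delta k = delta k.

(* rho = half the sum of positive roots beta^i_a - beta^i_b, a < b *)
Definition rho : MR :=
  fun k => 2^-1 * \sum_(i : I) \sum_(a : 'I_(d i)) \sum_(b : 'I_(d i) | (a < b)%N)
             (basis i a k - basis i b k).

Definition dot_act (w : forall i : I, {perm 'I_(d i)}) (chi : MR) : MR :=
  fun k => weyl_act w (fun k' => chi k' + rho k') k - rho k.

End QuiverWeights.

(* (a) The region W contains the line R tau_d, so for r > 0 the vector chi lies
   in rW iff chi + c tau_d does, and an expansion of chi with coefficients in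
   [-r, 0] turns into one of chi + c tau_d by changing only the coefficient of
   tau_d.
   (b) As delta is Weyl-invariant, w*chi + rho + delta = w(chi + rho + delta).
   The Weyl group acts by permuting coordinates; this permutes the multiset of
   weights of R(d) and fixes the constant vector tau_d, so it maps W onto itself
   and expansions to expansions with as many coefficients equal to -r. *)

From HB Require Import structures.
From mathcomp Require Import all_boot all_order all_algebra all_fingroup.
From mathcomp Require Import boolp classical_sets reals.
Import Order.TTheory GRing.Theory Num.Theory.
Local Open Scope ring_scope.

Section InfUpclosed.
Local Open Scope classical_set_scope.

Lemma inf_upclosed_pos {R : realType} (S : set R) :
  (forall r, S r -> 0 <= r) -> (forall r r', S r -> r <= r' -> S r') ->
  inf S = inf [set r | 0 < r /\ S r].
Proof.
move=> S_ge0 S_up; set P := [set r | 0 < r /\ S r].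
have [[r Sr]|S0] := pselect (S !=set0); last first.
  have S_eq0 : S = set0 by apply/seteqP; split=> // r Sr; apply: S0; exists r.
  by congr inf; rewrite /P S_eq0; apply/seteqP; split=> // r [].
have P_r1 : P (r + 1).
  have r1_gt0 : 0 < r + 1 by rewrite ltr_wpDl ?S_ge0.
  by split=> //; apply: S_up Sr _; rewrite lerDl.
have lbS : has_lbound S by exists 0.
have lbP : has_lbound P by exists 0 => y [/ltW].
apply/eqP; rewrite eq_le; apply/andP; split.
  by apply: lb_le_inf; [exists (r + 1) | move=> y [_ /(ge_inf lbS)]].
apply: lb_le_inf; first by exists r.
move=> y Sy; apply/ler_addgt0Pr => e e_gt0; apply: ge_inf => //; split.
  by rewrite ltr_wpDl ?S_ge0.
by apply: S_up Sy _; rewrite lerDl ltW.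
Qed.

End InfUpclosed.

Section QuiverInvariants.
Variables (R : realType) (I E : finType) (s t : E -> I) (d : I -> nat).
Local Notation MR := (MR R I d).
Local Notation K := (Kidx I d).
Local Notation W := (Widx I E s t d).
Local Notation basis := (basis R I d).
Local Notation wt := (wt R I E s t d).
Local Notation tau := (tau_d R I d).
Local Notation in_W := (in_W R I E s t d).
Local Notation r_inv := (r_inv R I E s t d).
Local Notation p_inv := (p_inv R I E s t d).
Local Notation weyl_act := (weyl_act R I d).

Lemma tau_dE k : tau k = (\sum_i d i)%:R^-1.
Proof.
rewrite /tau_d /=; suff -> : \sum_i \sum_(j < d i) basis i j k = 1 by rewrite mul1r.
case: k => i0 j0; rewrite (bigD1 i0) //= [X in _ + X]big1 => [|i ne_i]; last first.
  apply: big1 => j _; rewrite /basis ifF //; apply: contraNF ne_i => /eqP.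
  by move/(congr1 tag) => /= ->.
rewrite addr0 (bigD1 j0) //= [X in _ + X]big1 => [|j ne_j].
  by rewrite /basis eqxx addr0.
by rewrite /basis eq_Tagged eq_sym (negbTE ne_j).
Qed.

Lemma in_W_scale q x : 0 <= q <= 1 -> in_W x -> in_W (fun k => q * x k).
Proof.
move=> /andP[q_ge0 q_le1] [l [c [l01 xE]]].
exists (fun b => q * l b), (q * c); split=> [b|k].
  by have /andP[l_ge0 l_le1] := l01 b; rewrite mulr_ge0 ?mulr_ile1.
rewrite xE mulrDr mulr_sumr mulrA; congr (_ + _).
by apply: eq_bigr => b _; rewrite mulrA.
Qed.

Lemma in_W_add_tau c x : in_W x -> in_W (fun k => x k + c * tau k).
Proof.
move=> [l [c0 [l01 xE]]]; exists l, (c0 + c); split=> // k.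
by rewrite xE mulrDl addrA.
Qed.

Definition r_set (chi : MR) : set R :=
  [set r | 0 <= r /\ exists x, in_W x /\ forall k, chi k = r * x k].

Lemma r_invE chi : r_inv chi = inf (r_set chi). Proof. by []. Qed.

Lemma r_set_ge0 chi r : r_set chi r -> 0 <= r. Proof. by case. Qed.

Lemma r_set_upclosed chi r r' : r_set chi r -> r <= r' -> r_set chi r'.
Proof.
move=> [r_ge0 [x [Wx chiE]]] le_rr'; have r'_ge0 := le_trans r_ge0 le_rr'.
split=> //; have [r'0|r'_neq0] := eqVneq r' 0.
  have r0 : r = 0 by apply/le_anti; rewrite r_ge0 -r'0 le_rr'.
  by exists x; split=> // k; rewrite chiE r0 r'0.
have r'_gt0 : 0 < r' by rewrite lt0r r'_neq0.
exists (fun k => r / r' * x k); split.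
  apply: in_W_scale => //; apply/andP; split; first exact: divr_ge0.
  by rewrite ler_pdivrMr // mul1r.
by move=> k; rewrite chiE mulrA mulrCA divff // mulr1.
Qed.

Lemma r_set_add_tau chi c r : 0 < r ->
  r_set chi r -> r_set (fun k => chi k + c * tau k) r.
Proof.
move=> r_gt0 [r_ge0 [x [Wx chiE]]]; split=> //.
exists (fun k => x k + c / r * tau k); split; first exact: in_W_add_tau.
by move=> k; rewrite chiE mulrDr !tau_dE mulrA mulrCA divff ?mulr1 // gt_eqF.
Qed.

Lemma r_inv_add_tau chi c : r_inv (fun k => chi k + c * tau k) = r_inv chi.
Proof.
have chiE : chi = fun k => chi k + c * tau k + (- c) * tau k.
  by apply: funext => k; rewrite mulNr addrK.
(* [r_set] itself is not shift invariant: it contains [0] only when [chi = 0]. *)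
rewrite !r_invE !(inf_upclosed_pos _ (@r_set_ge0 _) (@r_set_upclosed _)).
congr inf; apply/seteqP; split=> r [r_gt0 chi_r]; split=> //.
  by rewrite chiE; apply: r_set_add_tau.
exact: r_set_add_tau.
Qed.

Definition expansion_with_count (r : R) (chi : MR) (n : nat) : Prop :=
  exists (c : W -> R) (c0 : R),
    [/\ forall b, - r <= c b <= 0,
        forall k, chi k = \sum_b c b * wt b k + c0 * tau k &
        #|[set b | c b == - r]| = n].

Lemma p_invE chi : p_inv chi = nat_min (expansion_with_count (r_inv chi) chi).
Proof. by []. Qed.

Lemma expansion_with_count_add_tau r chi c n :
  expansion_with_count r chi n ->
  expansion_with_count r (fun k => chi k + c * tau k) n.
Proof.
move=> [l [c0 [l_bound chiE count_l]]]; exists l, (c0 + c); split=> // k.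
by rewrite chiE mulrDl addrA.
Qed.

Lemma p_inv_add_tau chi c : p_inv (fun k => chi k + c * tau k) = p_inv chi.
Proof.
rewrite !p_invE r_inv_add_tau; congr nat_min.
apply: funext => n; apply: propext; split; last exact: expansion_with_count_add_tau.
move/(@expansion_with_count_add_tau _ _ (- c)).
by congr expansion_with_count; apply: funext => k; rewrite mulNr addrK.
Qed.

Section CoordinatePermutation.
Context {f : K -> K} {g : {perm W}}.
Hypothesis wt_comp : forall b k, wt b (f k) = wt (g b) k.

Lemma expansion_comp chi (c : W -> R) c0 :
  (forall k, chi k = \sum_b c b * wt b k + c0 * tau k) ->
  forall k, chi (f k) = \sum_b c ((g^-1)%g b) * wt b k + c0 * tau k.
Proof.
move=> chiE k; rewrite chiE !tau_dE; congr (_ + _).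
rewrite [RHS](reindex_inj (@perm_inj _ g)).
by apply: eq_bigr => b _; rewrite permK wt_comp.
Qed.

Lemma r_set_comp chi : (r_set chi `<=` r_set (chi \o f))%classic.
Proof.
move=> r [r_ge0 [x [[l [c0 [l01 xE]]] chiE]]]; split=> //.
exists (x \o f); split=> [|k]; last exact: chiE.
exists (fun b => l ((g^-1)%g b)), c0; split=> //; exact: expansion_comp.
Qed.

Lemma expansion_with_count_comp chi r n :
  expansion_with_count r chi n -> expansion_with_count r (chi \o f) n.
Proof.
move=> [l [c0 [l_bound chiE count_l]]].
exists (fun b => l ((g^-1)%g b)), c0; split=> //; first exact: expansion_comp.
rewrite -count_l -(card_preimset _ (@perm_inj _ g)).
by apply: eq_card => b; rewrite !inE permK.
Qed.

End CoordinatePermutation.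

Definition weyl_inv (w : forall i, {perm 'I_(d i)}) i := ((w i)^-1)%g.

Definition weyl_idx (w : forall i, {perm 'I_(d i)}) (k : K) : K :=
  Tagged (fun i => 'I_(d i)) ((weyl_inv w (tag k)) (tagged k)).

Definition weyl_arrow (w : forall i, {perm 'I_(d i)}) (b : W) : W :=
  Tagged (fun a => ('I_(d (s a)) * 'I_(d (t a)))%type)
    (w (s (tag b)) (tagged b).1, w (t (tag b)) (tagged b).2).

Lemma weyl_actE w x : weyl_act w x = x \o weyl_idx w. Proof. by []. Qed.

Section WeylAction.
Variable w : forall i, {perm 'I_(d i)}.

Lemma weyl_idxK : cancel (weyl_idx w) (weyl_idx (weyl_inv w)).
Proof. by case=> i j; rewrite /weyl_idx /weyl_inv /= invgK permKV. Qed.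

Lemma weyl_idxVK : cancel (weyl_idx (weyl_inv w)) (weyl_idx w).
Proof. by case=> i j; rewrite /weyl_idx /weyl_inv /= invgK permK. Qed.

Lemma weyl_arrowK : cancel (weyl_arrow w) (weyl_arrow (weyl_inv w)).
Proof. by case=> a [x y]; rewrite /weyl_arrow /weyl_inv /= !permK. Qed.

Definition weyl_arrow_perm : {perm W} := perm (can_inj weyl_arrowK).

Lemma basis_weyl i j k : basis i j (weyl_idx w k) = basis i (w i j) k.
Proof.
have wjE : weyl_idx w (Tagged (fun i => 'I_(d i)) (w i j)) = Tagged _ j.
  by rewrite /weyl_idx /weyl_inv /= permK.
by rewrite /basis -[in LHS]wjE (inj_eq (can_inj weyl_idxK)).
Qed.

Lemma wt_weyl b k : wt b (weyl_idx w k) = wt (weyl_arrow_perm b) k.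
Proof. by rewrite /wt permE !basis_weyl. Qed.

Lemma weyl_actK : cancel (weyl_act w) (weyl_act (weyl_inv w)).
Proof. by move=> x; apply: funext => k; rewrite !weyl_actE /= weyl_idxVK. Qed.

End WeylAction.

Lemma r_inv_weyl w x : r_inv (weyl_act w x) = r_inv x.
Proof.
have r_set_weyl w' y : (r_set y `<=` r_set (weyl_act w' y))%classic.
  by rewrite weyl_actE; exact: (r_set_comp (wt_weyl w') y).
rewrite !r_invE; congr inf; apply/seteqP; split; last exact: r_set_weyl.
by move=> r /(r_set_weyl (weyl_inv w)); rewrite weyl_actK.
Qed.

Lemma p_inv_weyl w x : p_inv (weyl_act w x) = p_inv x.
Proof.
have expansion_weyl w' y r n :
    expansion_with_count r y n -> expansion_with_count r (weyl_act w' y) n.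
  by rewrite weyl_actE; exact: (expansion_with_count_comp (wt_weyl w') y).
rewrite !p_invE r_inv_weyl; congr nat_min; apply: funext => n; apply: propext.
split; last exact: expansion_weyl.
by move/(expansion_weyl (weyl_inv w)); rewrite weyl_actK.
Qed.

Lemma dot_act_weyl w chi delta : weyl_invariant R I d delta ->
  (fun k => dot_act R I d w chi k + rho R I d k + delta k)
  = weyl_act w (fun k => chi k + rho R I d k + delta k).
Proof.
by move=> delta_inv; apply: funext => k; rewrite /dot_act subrK -(delta_inv w k).
Qed.

End QuiverInvariants.

Theorem proposition3p1 (R : realType) (I E : finType) (s t : E -> I) (d : I -> nat)
  (Hsym : symmetric_quiver I E s t) (Hst : standing_assumption I E s t d) :
  (forall (chi chi' : MR R I d) (c : R),
     (forall k, chi' k = chi k + c * tau_d R I d k) ->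
     r_inv R I E s t d chi = r_inv R I E s t d chi' /\
     p_inv R I E s t d chi = p_inv R I E s t d chi') /\
  (forall (chi : Kidx I d -> int) (w : forall i : I, {perm 'I_(d i)}) (delta : MR R I d),
     weyl_invariant R I d delta ->
     let x : MR R I d := fun k => (chi k)%:~R + rho R I d k + delta k in
     let y : MR R I d := fun k => dot_act R I d w (fun k' => (chi k')%:~R) k + rho R I d k + delta k in
     r_inv R I E s t d x = r_inv R I E s t d y /\ p_inv R I E s t d x = p_inv R I E s t d y).
Proof.
split=> [chi chi' c chi'E | chi w delta delta_inv x y].
  have -> : chi' = (fun k => chi k + c * tau_d R I d k) by apply: funext.
  by rewrite r_inv_add_tau p_inv_add_tau.
by rewrite /y dot_act_weyl // r_inv_weyl p_inv_weyl.
Qed.
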